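(* Let $L$ be a Lie algebra over a field $F$, $\tilde L=L\otimes_FE$, and let $\Omega\subset\operatorname{Der}(L)\otimes_FE$ be a finite family satisfying (U1) and (U2). Suppose $m\ge1$ and $U_k(\Omega)=0$ (as an operator on $\tilde L$) for every $k\ge m$. (1) If $m\ge2$, then $[aU_{m-1}(\Omega),bU_{m-1}(\Omega)]=0$ for arbitrary $a,b\in\tilde L$. (2) If $m\ge4$, $a\in\tilde L$ has standard decomposition $a=\sum_\pi a_\pi$, and $\Omega'=\{\operatorname{ad}(a_\pi U_{m-1}(\Omega))\}_\pi$, then $U_k(\Omega')=0$ for all $k\ge m-1$.
   Context: $E$ is the commutative associative $F$-algebra without unit generated by $e_1,e_2,\dots$ with relations $e_i^2=0$; its basis is $e_\pi=e_{i_1}\cdots e_{i_r}$ for nonempty finite $\pi=\{i_1<\dots<i_r\}$. $\tilde L=L\otimes_FE$ with $[x\otimes\alpha,y\otimes\beta]=[x,y]\otimes\alpha\beta$; every $a\in\tilde L$ is uniquely $a=\sum_\pi a_\pi$ with $a_\pi\in L\otimes e_\pi$ (standard decomposition). $D=\operatorname{Der}(L)$, $\tilde D=D\otimes E$ acts on $\tilde L$ by derivations, $\tilde D_i=\sum_{\pi\ni i}D\otimes e_\pi$; $\operatorname{ad}(b):x\mapsto[x,b]$ for $b\in\tilde L$ is regarded as an element of $\tilde D$. A finite family $\Omega\subset\tilde D$ satisfies (U1) if each element lies in some $\tilde D_i$, and (U2) if its elements pairwise commute. For a finite family $\Omega$ of pairwise commuting operators, $U_k(\Omega)=\sum d_1\cdots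 d_k$ over all $k$-element subsets $\{d_1,\dots,d_k\}\subseteq\Omega$, $U_0=\mathrm{Id}$. Operators act on the right. *)

From HB Require Import structures.
From mathcomp Require Import all_boot all_order all_algebra.
From mathcomp Require Import finmap.
Set Implicit Arguments. Unset Strict Implicit. Unset Printing Implicit Defensive.
Import GRing.Theory.
Local Open Scope ring_scope.


Section Defs.
Variables (F : fieldType) (L : lmodType F) (br : L -> L -> L).

Definition lie_alg : Prop :=
  [/\ (forall c x y z, br (c *: x + y) z = c *: br x z + br y z),
      (forall c x y z, br z (c *: x + y) = c *: br z x + br z y),
      (forall x, br x x = 0) &
      (forall x y z, br x (br y z) + br y (br z x) + br z (br x y) = 0)].

Definition is_der (d : L -> L) : Prop :=
  (forall c x y, d (c *: x + y) = c *: d x + d y) /\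
  (forall x y, d (br x y) = br (d x) y + br x (d y)).

(* Elements of L~ = L (x) E: the component at the basis element e_pi
   (pi a nonempty finite subset of nat). *)
Definition til := {fset nat} -> L.
(* Elements of D~ = Der(L) (x) E. *)
Definition dtil := {fset nat} -> L -> L.

(* x is a genuine element of L (x) E: finitely many nonzero components,
   none at the empty set (E has no unit). *)
Definition is_til (x : til) : Prop :=
  x fset0 = 0 /\ exists N : {fset nat}, forall pi, ~~ ((pi `<=` N)%fset) -> x pi = 0.

Definition is_dtil (d : dtil) : Prop :=
  [/\ forall pi, is_der (d pi),
      forall x, d fset0 x = 0 &
      exists N : {fset nat}, forall pi, ~~ ((pi `<=` N)%fset) -> forall x, d pi x = 0].

(* bracket on L~ : [x (x) e_s, y (x) e_t] = [x,y] (x) e_s e_t *)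
Definition brt (x y : til) : til := fun pi =>
  \sum_(s <- fpowerset pi | (s != fset0) && (s != pi)) br (x s) (y (pi `\` s)%fset).

(* right action of D~ on L~ : (x (x) e_s) (d (x) e_t) = x d (x) e_s e_t *)
Definition act (d : dtil) (x : til) : til := fun pi =>
  \sum_(s <- fpowerset pi | (s != fset0) && (s != pi)) d (pi `\` s)%fset (x s).

Definition adt (b : til) : dtil := fun pi x => br x (b pi).

Definition single (pi : {fset nat}) (v : L) : til :=
  fun s => if s == pi then v else 0.

Definition dzero : dtil := fun _ _ => 0.

(* x d_1 ... d_k (operators act on the right) *)
Definition act_seq (ds : seq dtil) (x : til) : til := foldl (fun y d => act d y) x ds.

Definition Uk (k : nat) (Om : seq dtil) (x : til) : til := fun pi =>
  \sum_(S : {set 'I_(size Om)} | #|S| == k)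
     act_seq [seq nth dzero Om (val i) | i <- enum S] x pi.

Definition U1 (Om : seq dtil) : Prop :=
  forall j, (j < size Om)%N ->
    exists i : nat, forall pi, i \notin pi -> forall x, nth dzero Om j pi x = 0.

Definition U2 (Om : seq dtil) : Prop :=
  forall i j, (i < size Om)%N -> (j < size Om)%N -> forall x, is_til x ->
    act (nth dzero Om j) (act (nth dzero Om i) x)
    = act (nth dzero Om i) (act (nth dzero Om j) x).

End Defs.

(* Every operator of Om lies in some D~_i and e_i^2 = 0, so a product of operators of Om
   vanishes as soon as one operator occurs twice, and so does the bracket of two such
   products sharing an operator.  Hence U_k behaves like the k-th elementary symmetric
   function of commuting derivations: it obeys the Leibniz rule
   [x, y] U_N = sum_i [x U_i, y U_(N-i)] and U_i U_(j-i) = C(j, i) U_j, so that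
   sum_i (-1)^i U_i U_(N-i) = 0 for N > 0.
   (1) is the Leibniz rule for N = 2(m-1) >= m: only the term i = m-1 survives.
   (2) Iterating the Leibniz rule and inverting it with the alternating identity gives
   x ad(b_1 U_(m-1)) ... ad(b_k U_(m-1)) = sum_(i<m) (-1)^i (x U_i ad b_1 ... ad b_k) U_(N-i)
   for N = k(m-1), and every term vanishes because N - i >= m once k >= m-1 >= 3. *)

From mathcomp Require Import all_boot all_order all_algebra.
From mathcomp Require Import finmap zify.
From Stdlib Require Import FunctionalExtensionality.
From Stdlib Require List.

Set Implicit Arguments.
Unset Strict Implicit.
Unset Printing Implicit Defensive.
Import GRing.Theory.
Local Open Scope ring_scope.

Section FpowersetSums.
Local Open Scope fset_scope.
Variable V : nmodType.
Implicit Types (pi s t u A : {fset nat}).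

Lemma big_seq_bij (X Y : eqType) (r1 : seq X) (r2 : seq Y) (h : Y -> X) (G : X -> V) :
  uniq r1 -> uniq r2 -> {in r2 &, injective h} -> r1 =i map h r2 ->
  \sum_(x <- r1) G x = \sum_(y <- r2) G (h y).
Proof.
move=> u1 u2 hinj e; rewrite -(big_map h xpredT); apply: perm_big; apply: uniq_perm => //.
by rewrite map_inj_in_uniq.
Qed.

Lemma big_fpowerset0_nonempty (Q : pred {fset nat}) (G : {fset nat} -> V) :
  \sum_(s <- fpowerset fset0 | (s != fset0) && Q s) G s = 0.
Proof.
rewrite big_seq_cond big1 // => s /andP[]; rewrite fpowersetE fsubset0 => /eqP->.
by rewrite eqxx.
Qed.

Lemma big_fpowerset_sub pi u (g : {fset nat} -> V) : u `<=` pi ->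
  \sum_(s <- fpowerset u) g s = \sum_(s <- fpowerset pi | s `<=` u) g s.
Proof.
move=> upi; rewrite [RHS]big_fset_condE; apply: eq_fbigl => s.
rewrite !inE /= !fpowersetE; apply/idP/andP => [su|[]//].
by rewrite su (fsubset_trans su upi).
Qed.

Lemma big_fpowerset_nested pi (g : {fset nat} -> {fset nat} -> {fset nat} -> V) :
  \sum_(u <- fpowerset pi) \sum_(s <- fpowerset u) g s (u `\` s) (pi `\` u) =
  \sum_(s <- fpowerset pi) \sum_(t <- fpowerset (pi `\` s)) g s t (pi `\` s `\` t).
Proof.
transitivity (\sum_(u <- fpowerset pi) \sum_(s <- fpowerset pi | s `<=` u)
                 g s (u `\` s) (pi `\` u)).
  by apply: eq_big_seq => u; rewrite fpowersetE => upi; rewrite (big_fpowerset_sub _ upi).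
rewrite (exchange_big_dep xpredT) //=; apply: eq_big_seq => s; rewrite fpowersetE => spi.
rewrite big_fset_condE (@big_seq_bij _ _ _ (fpowerset (pi `\` s)) (fun t => s `|` t)) ?fset_uniq //.
- apply: eq_big_seq => t; rewrite fpowersetCE => /andP[_ dts]; congr g; last first.
    by rewrite fsetDDl.
  apply/fsetP => z; rewrite !inE; have := fdisjointP dts z.
  by case: (z \in s); case: (z \in t) => //= /(_ isT).
- move=> y z; rewrite !fpowersetCE => /andP[_ dy] /andP[_ dz] /fsetP e.
  apply/fsetP => x; have := e x; rewrite !inE.
  have := fdisjointP dy x; have := fdisjointP dz x.
  by case: (x \in s) => //= Hz Hy _; apply/idP/idP => [/Hy|/Hz].
move=> u; rewrite !inE /= fpowersetE; apply/andP/mapP => [[upi su]|[t]].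
  exists (u `\` s); first by rewrite fpowersetE fsetSD.
  by rewrite fsetUDl fsetDv fsetD0; apply/esym/fsetUidPr.
rewrite fpowersetCE => /andP[tpi _] ->.
by rewrite fsubsetUl fsubUset spi.
Qed.

Lemma big_fpowerset_compl A (f : {fset nat} -> {fset nat} -> V) :
  \sum_(t <- fpowerset A) f t (A `\` t) = \sum_(t <- fpowerset A) f (A `\` t) t.
Proof.
rewrite (@big_seq_bij _ _ _ (fpowerset A) (fun t => A `\` t)) ?fset_uniq //.
- by apply: eq_big_seq => t; rewrite fpowersetE => tA; rewrite fsetDK.
- by move=> y z; rewrite !fpowersetE => yA zA e; rewrite -(fsetDK yA) -(fsetDK zA) e.
move=> x; rewrite fpowersetE; apply/idP/mapP => [xA|[t _ ->]]; last exact: fsubsetDl.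
by exists (A `\` x); rewrite ?fpowersetE ?fsubsetDl ?fsetDK.
Qed.

End FpowersetSums.

Lemma setUDK (T : finType) (A B : {set T}) : A \subset B -> A :|: B :\: A = B.
Proof. by move=> AB; rewrite setDE setUIr setUCr setIT (setUidPr AB). Qed.

Section FinsetSums.
Variables (V : nmodType) (n : nat).
Local Notation I := 'I_n.

Lemma big_subset_setU1 (S : {set I}) (j : I) (G : {set I} -> V) : j \notin S ->
  \sum_(A : {set I} | A \subset j |: S) G A = \sum_(A : {set I} | A \subset S) (G (j |: A) + G A).
Proof.
move=> jS; rewrite big_split /= addrC (bigID (fun A : {set I} => j \in A)) /= addrC; congr (_ + _).
  apply: eq_bigl => A; apply/andP/idP => [[/subsetP AjS jA]|/subsetP AS].
    by apply/subsetP => z zA; have /setU1P[zj|//] := AjS z zA; move: jA; rewrite -zj zA.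
  split; last by apply: contra jS => /AS.
  by apply/subsetP => z /AS zS; rewrite setU1r.
rewrite (reindex_onto (fun A => j |: A) (fun A => A :\ j)) /=; last first.
  by move=> A /andP[_ jA]; rewrite setD1K.
apply: eq_bigl => A; apply/andP/idP => [[/andP[/subsetP AjS _] /eqP <-]|/subsetP AS].
  by apply/subsetP => z /setD1P[zj /AjS]; rewrite !inE (negbTE zj).
have jA : j \notin A by apply: contra jS => /AS.
by rewrite setU1K // setU11 setUS ?eqxx //; apply/subsetP.
Qed.

Lemma big_disjoint_pairs (G : {set I} -> {set I} -> V) N i : (i <= N)%N ->
  \sum_(A : {set I} | #|A| == i) \sum_(B : {set I} | (#|B| == N - i)%N && [disjoint A & B]) G A B =
  \sum_(S : {set I} | #|S| == N) \sum_(A : {set I} | (A \subset S) && (#|A| == i)) G A (S :\: A).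
Proof.
move=> iN.
transitivity (\sum_(A : {set I} | #|A| == i)
                \sum_(S : {set I} | (A \subset S) && (#|S| == N)) G A (S :\: A)).
  apply: eq_bigr => A /eqP cA.
  rewrite (reindex_onto (fun S => S :\: A) (fun B => A :|: B)) /=; last first.
    by move=> B /andP[_ dAB]; rewrite setDUl setDv set0U; apply/setDidPl; rewrite disjoint_sym.
  apply: eq_bigl => S; apply/andP/andP => [[/andP[cD _] /eqP AS_S]|[AS /eqP cS]].
    have AS : A \subset S by rewrite -AS_S subsetUl.
    have iS : (i <= #|S|)%N by rewrite -cA subset_leq_card.
    by split=> //; rewrite -(eqn_sub2rE iS iN) -cA -cardsDS // cA.
  rewrite cardsDS // cA cS setUDK // !eqxx; split=> //.
  by rewrite disjoint_sym; apply/setDidPl; rewrite setDDl setUid.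
rewrite (exchange_big_dep (fun S : {set I} => #|S| == N)) /=; last by move=> A S _ /andP[].
by apply: eq_bigr => S cS; apply: eq_bigl => A; rewrite cS andbT andbC.
Qed.

End FinsetSums.

Lemma exchange_big_triangle (V : nmodType) N (f : nat -> nat -> V) :
  \sum_(j < N.+1) \sum_(i < (N - j)%N.+1) f i j = \sum_(i < N.+1) \sum_(j < (N - i)%N.+1) f i j.
Proof.
transitivity (\sum_(j < N.+1) \sum_(i < N.+1 | (i + j <= N)%N) f i j).
  apply: eq_bigr => j _; rewrite (big_ord_widen N.+1 (f^~ j)); last by lia.
  by apply: eq_bigl => i; have := ltn_ord j; have := ltn_ord i; move=> *; apply/idP/idP; lia.
rewrite (exchange_big_dep xpredT) //=; apply: eq_bigr => i _.
rewrite (big_ord_widen N.+1 (f i)); last by lia.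
by apply: eq_bigl => j; have := ltn_ord j; have := ltn_ord i; move=> *; apply/idP/idP; lia.
Qed.

Section Bracket.
Variables (F : fieldType) (L : lmodType F) (br : L -> L -> L).
Hypothesis brlinl : forall c (u v w : L), br (c *: u + v) w = c *: br u w + br v w.
Hypothesis brlinr : forall c (u v w : L), br w (c *: u + v) = c *: br w u + br w v.

Lemma brDl (u v w : L) : br (u + v) w = br u w + br v w.
Proof. by have := brlinl 1 u v w; rewrite !scale1r. Qed.
Lemma brDr (u v w : L) : br w (u + v) = br w u + br w v.
Proof. by have := brlinr 1 u v w; rewrite !scale1r. Qed.
Lemma br0l (w : L) : br 0 w = 0.
Proof. by apply: (addrI (br 0 w)); rewrite -brDl !addr0. Qed.
Lemma br0r (w : L) : br w 0 = 0.
Proof. by apply: (addrI (br w 0)); rewrite -brDr !addr0. Qed.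
Lemma brZl c (u w : L) : br (c *: u) w = c *: br u w.
Proof. by have := brlinl c u 0 w; rewrite !addr0 br0l addr0. Qed.
Lemma brZr c (u w : L) : br w (c *: u) = c *: br w u.
Proof. by have := brlinr c u 0 w; rewrite !addr0 br0r addr0. Qed.
Lemma br_suml I (r : seq I) (P : pred I) (f : I -> L) (w : L) :
  br (\sum_(i <- r | P i) f i) w = \sum_(i <- r | P i) br (f i) w.
Proof. by apply: (big_morph (br^~ w)) => [u v|]; rewrite ?brDl ?br0l. Qed.
Lemma br_sumr I (r : seq I) (P : pred I) (f : I -> L) (w : L) :
  br w (\sum_(i <- r | P i) f i) = \sum_(i <- r | P i) br w (f i).
Proof. by apply: (big_morph (br w)) => [u v|]; rewrite ?brDr ?br0r. Qed.

Section Derivation.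
Variable d : L -> L.
Hypothesis d_der : is_der br d.

Lemma derD (u v : L) : d (u + v) = d u + d v.
Proof. by have := d_der.1 1 u v; rewrite !scale1r. Qed.
Lemma der0 : d 0 = 0.
Proof. by apply: (addrI (d 0)); rewrite -derD !addr0. Qed.
Lemma derZ c (u : L) : d (c *: u) = c *: d u.
Proof. by have := d_der.1 c u 0; rewrite !addr0 der0 addr0. Qed.
Lemma der_sum I (r : seq I) (P : pred I) (f : I -> L) :
  d (\sum_(i <- r | P i) f i) = \sum_(i <- r | P i) d (f i).
Proof. by apply: (big_morph d) => [u v|]; rewrite ?derD ?der0. Qed.

End Derivation.

Local Notation T := (til L).
Implicit Types (x y : T) (d : dtil L).

Lemma act_fset0 d x : act d x fset0 = 0.
Proof. exact: big_fpowerset0_nonempty. Qed.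
Lemma brt_fset0 x y : brt br x y fset0 = 0.
Proof. exact: big_fpowerset0_nonempty. Qed.

Lemma brtE x y pi : x fset0 = 0 -> y fset0 = 0 ->
  brt br x y pi = \sum_(s <- fpowerset pi) br (x s) (y (pi `\` s)%fset).
Proof.
move=> x0 y0; rewrite /brt big_mkcond; apply: eq_bigr => s _.
case: ifP => // /negbT; rewrite negb_and !negbK => /orP[/eqP->|/eqP->].
  by rewrite x0 br0l.
by rewrite fsetDv y0 br0r.
Qed.

Section ActDerivation.
Variable d : dtil L.
Hypothesis d_der : forall pi, is_der br (d pi).

Lemma actE x pi : d fset0 =1 (fun=> 0) -> x fset0 = 0 ->
  act d x pi = \sum_(s <- fpowerset pi) d (pi `\` s)%fset (x s).
Proof.
move=> d0 x0; rewrite /act big_mkcond; apply: eq_bigr => s _.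
case: ifP => // /negbT; rewrite negb_and !negbK => /orP[/eqP->|/eqP->].
  by rewrite x0 der0.
by rewrite fsetDv d0.
Qed.

Lemma act_brt x y : d fset0 =1 (fun=> 0) -> x fset0 = 0 -> y fset0 = 0 ->
  act d (brt br x y) = fun pi => brt br (act d x) y pi + brt br x (act d y) pi.
Proof.
move=> d0 x0 y0; apply: functional_extensionality => pi.
rewrite actE ?brt_fset0 // !brtE ?act_fset0 //.
have expand t : d (pi `\` t)%fset (brt br x y t) =
    \sum_(s <- fpowerset t) br (d (pi `\` t)%fset (x s)) (y (t `\` s)%fset) +
    \sum_(s <- fpowerset t) br (x s) (d (pi `\` t)%fset (y (t `\` s)%fset)).
  by rewrite brtE // der_sum // -big_split; apply: eq_bigr => s _; rewrite (d_der _).2.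
rewrite (eq_bigr _ (fun t _ => expand t)) big_split /=; congr (_ + _).
  rewrite (big_fpowerset_nested pi (fun s w t => br (d t (x s)) (y w))).
  transitivity (\sum_(t <- fpowerset pi) \sum_(s <- fpowerset t)
     br (d (t `\` s)%fset (x s)) (y (pi `\` t)%fset)); last first.
    by apply: eq_bigr => t _; rewrite actE // br_suml.
  rewrite (big_fpowerset_nested pi (fun s t w => br (d t (x s)) (y w))).
  apply: eq_bigr => s _.
  exact: (@big_fpowerset_compl _ _ (fun t w => br (d w (x s)) (y t))).
rewrite (big_fpowerset_nested pi (fun s w t => br (x s) (d t (y w)))).
apply: eq_bigr => s _; rewrite actE // br_sumr.
by apply: eq_bigr => r _; rewrite fsetDDl.
Qed.

End ActDerivation.

(* Linearity is stated pointwise because [til L] carries no module structure. *)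
Definition tlinear (Phi : T -> T) :=
  (forall x y, Phi (fun pi => x pi + y pi) = fun pi => Phi x pi + Phi y pi) /\
  (forall c x, Phi (fun pi => c *: x pi) = fun pi => c *: Phi x pi).

Lemma tlinear0 Phi : tlinear Phi -> Phi (fun=> 0) = fun=> 0.
Proof.
move=> [_ PhiZ]; have := PhiZ 0 (fun=> 0).
rewrite (_ : (fun=> 0 *: 0) = fun=> 0) => [->|]; apply: functional_extensionality => pi.
  by rewrite scale0r.
by rewrite scaler0.
Qed.

Lemma tlinear_sum Phi : tlinear Phi -> forall I (r : seq I) (P : pred I) (f : I -> T),
  Phi (fun pi => \sum_(i <- r | P i) f i pi) = fun pi => \sum_(i <- r | P i) Phi (f i) pi.
Proof.
move=> Phi_lin I r P f; elim: r => [|i r IH].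
  under [X in Phi X]functional_extensionality => pi do rewrite big_nil.
  by rewrite tlinear0 //; apply: functional_extensionality => pi; rewrite big_nil.
under [X in Phi X]functional_extensionality => pi do rewrite big_cons.
by case Pi: (P i); rewrite ?Phi_lin.1 IH; apply: functional_extensionality => pi;
  rewrite big_cons Pi.
Qed.

Lemma tlinear_sumZ Phi : tlinear Phi ->
  forall I (r : seq I) (P : pred I) (c : I -> F) (f : I -> T),
  Phi (fun pi => \sum_(i <- r | P i) c i *: f i pi) =
  fun pi => \sum_(i <- r | P i) c i *: Phi (f i) pi.
Proof.
move=> Phi_lin I r P c f; rewrite (tlinear_sum Phi_lin r P (fun i pi => c i *: f i pi)).
by apply: functional_extensionality => pi; apply: eq_bigr => i _; rewrite Phi_lin.2.
Qed.

Lemma tlinear_comp Phi Psi : tlinear Phi -> tlinear Psi -> tlinear (Psi \o Phi).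
Proof. by move=> [PhiD PhiZ] [PsiD PsiZ]; split=> [x y|c x] /=; rewrite ?PhiD ?PhiZ. Qed.

Lemma tlinear_act d : (forall pi, is_der br (d pi)) -> tlinear (act d).
Proof.
move=> d_der; split=> [x y|c x]; apply: functional_extensionality => pi; rewrite /act.
  by rewrite -big_split; apply: eq_bigr => s _; rewrite derD.
by rewrite scaler_sumr; apply: eq_bigr => s _; rewrite derZ.
Qed.

Lemma tlinear_brtl y : tlinear (brt br ^~ y).
Proof.
split=> [x x'|c x]; apply: functional_extensionality => pi; rewrite /brt.
  by rewrite -big_split; apply: eq_bigr => s _; rewrite brDl.
by rewrite scaler_sumr; apply: eq_bigr => s _; rewrite brZl.
Qed.

Lemma tlinear_brtr x : tlinear (brt br x).
Proof.
split=> [y y'|c y]; apply: functional_extensionality => pi; rewrite /brt.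
  by rewrite -big_split; apply: eq_bigr => s _; rewrite brDr.
by rewrite scaler_sumr; apply: eq_bigr => s _; rewrite brZr.
Qed.

Lemma brt0l y : brt br (fun=> 0) y = fun=> 0.
Proof. exact: tlinear0 (tlinear_brtl y). Qed.
Lemma brt0r x : brt br x (fun=> 0) = fun=> 0.
Proof. exact: tlinear0 (tlinear_brtr x). Qed.

Lemma is_til_act d x : is_dtil br d -> is_til x -> is_til (act d x).
Proof.
move=> [d_der _ [Nd dN]] [_ [Nx xN]]; split; first exact: act_fset0.
exists (Nx `|` Nd)%fset => pi piN.
rewrite /act big_seq_cond big1 // => s /andP[_ _].
have [sN|sN] := boolP (s `<=` Nx)%fset; last by rewrite xN // der0.
rewrite dN //; apply: contra piN; rewrite fsubDset => /fsubset_trans; apply.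
exact: fsetSU.
Qed.

Lemma is_til_brt x y : is_til x -> is_til y -> is_til (brt br x y).
Proof.
move=> [_ [Nx xN]] [_ [Ny yN]]; split; first exact: brt_fset0.
exists (Nx `|` Ny)%fset => pi piN.
rewrite /brt big_seq_cond big1 // => s /andP[_ _].
have [sN|sN] := boolP (s `<=` Nx)%fset; last by rewrite xN // br0l.
rewrite yN ?br0r //; apply: contra piN; rewrite fsubDset => /fsubset_trans; apply.
exact: fsetSU.
Qed.

Lemma is_til_add x y : is_til x -> is_til y -> is_til (fun pi => x pi + y pi).
Proof.
move=> [x0 [Nx xN]] [y0 [Ny yN]]; split; first by rewrite x0 y0 addr0.
exists (Nx `|` Ny)%fset => pi piN; rewrite xN ?yN ?addr0 //; apply: contra piN => piN.
  exact: fsubset_trans piN (fsubsetUr _ _).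
exact: fsubset_trans piN (fsubsetUl _ _).
Qed.

Lemma is_til_sum I (r : seq I) (P : pred I) (f : I -> T) :
  (forall i, P i -> is_til (f i)) -> is_til (fun pi => \sum_(i <- r | P i) f i pi).
Proof.
move=> f_til; elim: r => [|i r IH].
  by split=> [|]; [rewrite big_nil | exists fset0 => pi _; rewrite big_nil].
under [X in is_til X]functional_extensionality => pi do rewrite big_cons.
by case Pi: (P i) => //; apply: is_til_add => //; apply: f_til.
Qed.

Lemma is_til_single x pi : is_til x -> is_til (single pi (x pi)).
Proof.
move=> [x0 _]; split; first by rewrite /single; case: eqP => // <-.
by exists pi => s; rewrite /single; case: eqP => // ->; rewrite fsubset_refl.
Qed.

Definition in_Ltil (i : nat) x := forall pi, i \notin pi -> x pi = 0.
Definition in_Dtil (i : nat) d := forall pi, i \notin pi -> forall u, d pi u = 0.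

Lemma act_in_Ltil d i x : in_Dtil i d -> in_Ltil i (act d x).
Proof.
by move=> di pi ipi; rewrite /act big1 // => s _; apply: di; apply: contra ipi => /fsetDP[].
Qed.

Lemma act_in_Ltil_stable d i x : (forall pi, is_der br (d pi)) -> in_Ltil i x ->
  in_Ltil i (act d x).
Proof.
move=> d_der xi pi ipi; rewrite /act big_seq_cond big1 // => s /andP[].
rewrite fpowersetE => /fsubsetP spi _; rewrite xi ?der0 //.
by apply: contra ipi => /spi.
Qed.

Lemma act_in_Ltil_eq0 d i x : (forall pi, is_der br (d pi)) -> in_Dtil i d -> in_Ltil i x ->
  act d x = fun=> 0.
Proof.
move=> d_der di xi; apply: functional_extensionality => pi.
rewrite /act big1 // => s _.
have [i_s|i_s] := boolP (i \in s); last by rewrite xi ?der0.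
by rewrite di // inE i_s.
Qed.

Lemma brt_in_Ltil_eq0 i x y : in_Ltil i x -> in_Ltil i y -> brt br x y = fun=> 0.
Proof.
move=> xi yi; apply: functional_extensionality => pi.
rewrite /brt big1 // => s _.
have [i_s|i_s] := boolP (i \in s); last by rewrite xi ?br0l.
by rewrite yi ?br0r // inE i_s.
Qed.

Lemma act_seq_cat (ds1 ds2 : seq (dtil L)) x :
  act_seq (ds1 ++ ds2) x = act_seq ds2 (act_seq ds1 x).
Proof. exact: foldl_cat. Qed.

Lemma act_seq_rcons (ds : seq (dtil L)) d x : act_seq (rcons ds d) x = act d (act_seq ds x).
Proof. by rewrite -cats1 act_seq_cat. Qed.

Lemma is_til_nth (rs : seq T) j : List.Forall (@is_til _ L) rs -> (j < size rs)%N ->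
  is_til (nth (fun=> 0) rs j).
Proof. by move=> rs_til; elim: rs_til j => [|r {}rs r_til _ IH] [|j] //= /IH. Qed.

Definition nest x (rs : seq T) : T := foldr (fun r y => brt br y r) x rs.

Lemma act_seq_adt (bs : seq T) x : act_seq (map (adt br) bs) x = nest x (rev bs).
Proof. by elim: bs x => [|b bs IH] x //=; rewrite IH rev_cons /nest foldr_rcons. Qed.

Lemma is_til_nest x (rs : seq T) : is_til x -> List.Forall (@is_til _ L) rs -> is_til (nest x rs).
Proof. by move=> x_til; elim=> [|r {}rs r_til _ IH] //=; apply: is_til_brt. Qed.

Lemma nest0 (rs : seq T) : nest (fun=> 0) rs = fun=> 0.
Proof. by elim: rs => [|r rs IH] //=; rewrite IH brt0l. Qed.

Section Family.
Variable Om : seq (dtil L).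
Hypothesis Om_dtil : forall j, (j < size Om)%N -> is_dtil br (nth (@dzero _ L) Om j).
Hypothesis Om_U1 : U1 Om.
Hypothesis Om_U2 : U2 Om.
Local Notation I := 'I_(size Om).
Implicit Types (l : seq I) (A B S : {set I}).

Definition om (j : I) := nth (@dzero _ L) Om j.
Definition actS S x := act_seq [seq om j | j <- enum S] x.

Lemma om_dtil j : is_dtil br (om j). Proof. exact: Om_dtil (ltn_ord j). Qed.
Lemma om_der j pi : is_der br (om j pi). Proof. by case: (om_dtil j). Qed.
Lemma om0 j : om j fset0 =1 fun=> 0. Proof. by case: (om_dtil j). Qed.
Lemma om_in_Dtil j : exists i, in_Dtil i (om j). Proof. exact: Om_U1 (ltn_ord j). Qed.

Lemma tlinear_act_seq l : tlinear (act_seq (map om l)).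
Proof.
elim: l => [|j l IH] /=; first by [].
exact: tlinear_comp (tlinear_act (om_der j)) IH.
Qed.

Lemma is_til_act_seq l x : is_til x -> is_til (act_seq (map om l) x).
Proof.
elim: l x => [|j l IH] x x_til //=.
exact/IH/is_til_act/x_til/om_dtil.
Qed.

Lemma tlinear_actS S : tlinear (actS S).
Proof. exact: tlinear_act_seq. Qed.

Lemma UkE k x : Uk k Om x = fun pi => \sum_(S : {set I} | #|S| == k) actS S x pi.
Proof. by []. Qed.

Lemma is_til_Uk k x : is_til x -> is_til (Uk k Om x).
Proof. by move=> x_til; apply: is_til_sum => S _; apply: is_til_act_seq. Qed.

Lemma tlinear_Uk k : tlinear (Uk k Om).
Proof.
split=> [x y|c x]; rewrite !UkE; apply: functional_extensionality => pi.
  by rewrite -big_split; apply: eq_bigr => S _; rewrite (tlinear_actS S).1.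
by rewrite scaler_sumr; apply: eq_bigr => S _; rewrite (tlinear_actS S).2.
Qed.

Lemma act_seq_rem l j x : is_til x -> j \in l ->
  act_seq (map om l) x = act_seq (map om (rem j l)) (act (om j) x).
Proof.
elim: l x => [|k l IH] x x_til //.
have [-> _|kj] := eqVneq k j; first by rewrite /= eqxx.
rewrite inE eq_sym (negbTE kj) /= => jl; rewrite (negbTE kj) /=.
rewrite IH ?jl //; last exact: is_til_act (om_dtil k) x_til.
by rewrite Om_U2.
Qed.

Lemma act_seq_perm l1 l2 x : is_til x -> perm_eq l1 l2 ->
  act_seq (map om l1) x = act_seq (map om l2) x.
Proof.
elim: l1 l2 x => [|j l1 IH] l2 x x_til pe.
  by move: pe; rewrite perm_sym => /perm_nilP ->.
have jl2 : j \in l2 by rewrite -(perm_mem pe) mem_head.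
rewrite (act_seq_rem x_til jl2) /=; apply: IH; first exact: is_til_act (om_dtil j) x_til.
by rewrite -(perm_cons j); apply: perm_trans pe _; apply: perm_to_rem.
Qed.

Lemma actS0 x : actS set0 x = x.
Proof. by rewrite /actS enum_set0. Qed.

Lemma actS_setU1 S j x : is_til x -> j \notin S -> actS (j |: S) x = act (om j) (actS S x).
Proof.
move=> x_til jS; rewrite /actS -act_seq_rcons -map_rcons.
apply: act_seq_perm => //; apply: uniq_perm; rewrite ?rcons_uniq ?mem_enum ?jS ?enum_uniq //.
by move=> z; rewrite mem_rcons mem_enum !inE mem_enum.
Qed.

Lemma actS_setU A B x : is_til x -> [disjoint A & B] -> actS B (actS A x) = actS (A :|: B) x.
Proof.
move=> x_til dAB; rewrite /actS -act_seq_cat -map_cat; apply: act_seq_perm => //.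
apply: uniq_perm; rewrite ?enum_uniq //.
  rewrite cat_uniq !enum_uniq /= andbT; apply/hasPn => z; rewrite !mem_enum => zB.
  by rewrite (disjointFl dAB zB).
by move=> z; rewrite mem_cat !mem_enum inE.
Qed.

Lemma actS_in_Ltil S j i x : is_til x -> in_Dtil i (om j) -> j \in S -> in_Ltil i (actS S x).
Proof.
move=> x_til ji jS; rewrite /actS (act_seq_rem (j := j) x_til) ?mem_enum //.
elim: (rem _ _) (act (om j) x) (act_in_Ltil x ji) => [|k l IH] //= y yi.
exact/IH/act_in_Ltil_stable/yi/om_der.
Qed.

Lemma actS_actS_eq0 A B j x : is_til x -> j \in A -> j \in B -> actS B (actS A x) = fun=> 0.
Proof.
move=> x_til jA jB; have [i ji] := om_in_Dtil j.
rewrite /actS (act_seq_rem (j := j) (is_til_act_seq _ x_til)) ?mem_enum //.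
rewrite (act_in_Ltil_eq0 (om_der j) ji); first exact: tlinear0 (tlinear_act_seq _).
exact: actS_in_Ltil ji jA.
Qed.

Lemma brt_actS_eq0 A B j x y : is_til x -> is_til y -> j \in A -> j \in B ->
  brt br (actS A x) (actS B y) = fun=> 0.
Proof.
move=> x_til y_til jA jB; have [i ji] := om_in_Dtil j.
by apply: (@brt_in_Ltil_eq0 i); apply: actS_in_Ltil ji _.
Qed.

Lemma actS_brt S x y : is_til x -> is_til y ->
  actS S (brt br x y) =
  fun pi => \sum_(A : {set I} | A \subset S) brt br (actS A x) (actS (S :\: A) y) pi.
Proof.
move=> x_til y_til; move: {2}#|S| (erefl #|S|) => k; elim: k S => [|k IH] S cS.
  rewrite (cards0_eq cS) actS0; apply: functional_extensionality => pi.
  by rewrite (big_pred1 set0) => [|A]; rewrite ?setDv ?actS0 ?subset0.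
have [j jS] : exists j, j \in S by apply/set0Pn; rewrite -cards_eq0 cS.
set S0 := S :\ j.
have S0j : j \notin S0 by rewrite setD11.
have cS0 : #|S0| = k by move: cS; rewrite (cardsD1 j S) jS => -[].
have -> : S = j |: S0 by rewrite setD1K.
rewrite (actS_setU1 (is_til_brt x_til y_til) S0j) (IH _ cS0).
rewrite (tlinear_sum (tlinear_act (om_der j))).
apply: functional_extensionality => pi; rewrite big_subset_setU1 //.
apply: eq_bigr => A AS0.
have jA : j \notin A by apply: contra S0j => /(subsetP AS0).
have jB : j \notin S0 :\: A by rewrite inE (negbTE S0j) andbF.
have til_A : is_til (actS A x) := is_til_act_seq _ x_til.
have til_B : is_til (actS (S0 :\: A) y) := is_til_act_seq _ y_til.
rewrite (act_brt (om_der j) (om0 j) til_A.1 til_B.1).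
have -> : (j |: S0) :\: (j |: A) = S0 :\: A.
  by apply/setP => z; rewrite !inE; case: eqVneq => [->|]; rewrite ?andbF.
have -> : (j |: S0) :\: A = j |: (S0 :\: A).
  by apply/setP => z; rewrite !inE; case: eqVneq => [->|]; rewrite ?(negbTE jA).
by rewrite !actS_setU1.
Qed.

Lemma brt_Uk_Uk i j x y pi :
  brt br (Uk i Om x) (Uk j Om y) pi =
  \sum_(A : {set I} | #|A| == i) \sum_(B : {set I} | #|B| == j) brt br (actS A x) (actS B y) pi.
Proof.
rewrite UkE (tlinear_sum (tlinear_brtl _)); apply: eq_bigr => A _.
by rewrite UkE (tlinear_sum (tlinear_brtr _)).
Qed.

Lemma Uk_brt N x y : is_til x -> is_til y ->
  Uk N Om (brt br x y) = fun pi => \sum_(i < N.+1) brt br (Uk i Om x) (Uk (N - i)%N Om y) pi.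
Proof.
move=> x_til y_til; apply: functional_extensionality => pi; rewrite UkE.
transitivity (\sum_(S : {set I} | #|S| == N) \sum_(A : {set I} | A \subset S)
                 brt br (actS A x) (actS (S :\: A) y) pi).
  by apply: eq_bigr => S _; rewrite actS_brt.
transitivity (\sum_(i < N.+1) \sum_(S : {set I} | #|S| == N)
   \sum_(A : {set I} | (A \subset S) && (#|A| == i)) brt br (actS A x) (actS (S :\: A) y) pi);
  last first.
  apply: eq_bigr => i _; rewrite brt_Uk_Uk.
  rewrite -(big_disjoint_pairs (fun A B => brt br (actS A x) (actS B y) pi) (leq_ord i)).
  apply: eq_bigr => A _; rewrite [RHS](bigID (fun B => [disjoint A & B])) /=.
  rewrite [X in _ = _ + X]big1 ?addr0 // => B /andP[_ AB].
  have /set0Pn[j /setIP[jA jB]] : A :&: B != set0 by rewrite setI_eq0.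
  by rewrite (brt_actS_eq0 x_til y_til jA jB).
rewrite exchange_big /=; apply: eq_bigr => S /eqP cS.
rewrite (exchange_big_dep (fun A : {set I} => A \subset S)) /=; last by move=> i A _ /andP[].
apply: eq_bigr => A AS.
have cA : (#|A| < N.+1)%N by rewrite ltnS -cS subset_leq_card.
by rewrite (big_pred1 (Ordinal cA)) // => i; rewrite AS /= -val_eqE /= eq_sym.
Qed.

Lemma Uk0 x : Uk 0 Om x = x.
Proof.
rewrite UkE; apply: functional_extensionality => pi.
by rewrite (big_pred1 set0) => [|S]; rewrite ?actS0 ?cards_eq0.
Qed.

Lemma Uk_brt_rev N x y : is_til x -> is_til y ->
  Uk N Om (brt br x y) = fun pi => \sum_(j < N.+1) brt br (Uk (N - j)%N Om x) (Uk j Om y) pi.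
Proof.
move=> x_til y_til; rewrite Uk_brt //; apply: functional_extensionality => pi.
rewrite (reindex_inj rev_ord_inj) /=; apply: eq_bigr => i _.
by rewrite subnS subSKn subKn // -ltnS.
Qed.

Lemma Uk_Uk i j x pi : is_til x -> (i <= j)%N ->
  Uk (j - i)%N Om (Uk i Om x) pi = \sum_(S : {set I} | #|S| == j) actS S x pi *+ 'C(j, i).
Proof.
move=> x_til ij; rewrite UkE.
under eq_bigr => B _ do rewrite UkE (tlinear_sum (tlinear_actS B)).
rewrite exchange_big /=.
transitivity (\sum_(A : {set I} | #|A| == i)
   \sum_(B : {set I} | (#|B| == j - i)%N && [disjoint A & B]) actS (A :|: B) x pi).
  apply: eq_bigr => A _; rewrite (bigID (fun B => [disjoint A & B])) /=.
  rewrite [X in _ + X]big1 ?addr0 => [|B /andP[_ AB]].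
    by apply: eq_bigr => B /andP[_ AB]; rewrite actS_setU.
  have /set0Pn[k /setIP[kA kB]] : A :&: B != set0 by rewrite setI_eq0.
  by rewrite (actS_actS_eq0 x_til kA kB).
rewrite (big_disjoint_pairs (fun A B => actS (A :|: B) x pi) ij).
apply: eq_bigr => S /eqP cS.
under eq_bigr => A /andP[AS _] do rewrite setUDK //.
rewrite sumr_const -cS -cards_draws.
by congr (_ *+ _); apply: eq_card => A; rewrite inE.
Qed.

Lemma Uk_alternating N x pi : is_til x -> (0 < N)%N ->
  \sum_(i < N.+1) (-1) ^+ i *: Uk (N - i)%N Om (Uk i Om x) pi = 0.
Proof.
move=> x_til N_gt0.
under eq_bigr => i _ do rewrite (Uk_Uk pi x_til (leq_ord i)) scaler_sumr.
rewrite exchange_big /= big1 // => S _.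
under eq_bigr => i _ do rewrite -scalerMnr scalerMnl.
rewrite -scaler_suml.
have -> : \sum_(i < N.+1) (-1) ^+ i *+ 'C(N, i) = (1 - 1 : F) ^+ N.
  by rewrite exprBn; apply: eq_bigr => i _; rewrite !expr1n !mulr1.
by rewrite subrr expr0n eqn0Ngt N_gt0 scale0r.
Qed.

(* [nestU N x [:: r_1; ...; r_k]] is the sum of [nest x [:: Uk j_1 Om r_1; ...]] over all
   j_1 + ... + j_k = N. *)
Fixpoint nestU N x (rs : seq T) : T :=
  if rs is r :: rs' then fun pi => \sum_(j < N.+1) brt br (nestU (N - j)%N x rs') (Uk j Om r) pi
  else if N == 0%N then x else fun=> 0.

Lemma nestU_alternating N x (rs : seq T) : is_til x -> List.Forall (@is_til _ L) rs ->
  nestU N x rs =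
  fun pi => \sum_(i < N.+1) (-1) ^+ i *: Uk (N - i)%N Om (nest (Uk i Om x) rs) pi.
Proof.
move=> x_til rs_til; elim: rs_til N => [|r {}rs r_til rs_til IH] N /=.
  apply: functional_extensionality => pi; case: N => [|N] /=.
    by rewrite big_ord1 expr0 scale1r !Uk0.
  by rewrite Uk_alternating.
apply: functional_extensionality => pi.
under eq_bigr => j _ do rewrite IH (tlinear_sumZ (tlinear_brtl _)).
rewrite (exchange_big_triangle _ (fun i j => (-1) ^+ i *:
   brt br (Uk (N - j - i)%N Om (nest (Uk i Om x) rs)) (Uk j Om r) pi)).
apply: eq_bigr => i _.
have nest_til : is_til (nest (Uk i Om x) rs) by apply/is_til_nest/rs_til/is_til_Uk.
rewrite (Uk_brt_rev _ nest_til r_til) scaler_sumr.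
by apply: eq_bigr => j _; rewrite subnAC.
Qed.

Section Nilpotent.
Variable m : nat.
Hypothesis m_gt0 : (0 < m)%N.
Hypothesis Uk_vanish : forall k, (m <= k)%N -> forall x, is_til x -> forall pi, Uk k Om x pi = 0.

Lemma Uk_eq0 k x : (m <= k)%N -> is_til x -> Uk k Om x = fun=> 0.
Proof. by move=> mk x_til; apply: functional_extensionality => pi; apply: Uk_vanish. Qed.

Lemma brt_Uk_pred_eq0 x y pi : (1 < m)%N -> is_til x -> is_til y ->
  brt br (Uk m.-1 Om x) (Uk m.-1 Om y) pi = 0.
Proof.
move=> m_gt1 x_til y_til; set N := (m.-1 + m.-1)%N.
have mN : (m.-1 < N.+1)%N by rewrite /N; lia.
have m_le_N : (m <= N)%N by rewrite /N; lia.
rewrite -(Uk_vanish m_le_N (is_til_brt x_til y_til) pi).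
rewrite Uk_brt // (bigD1 (Ordinal mN)) //= (_ : N - m.-1 = m.-1)%N; last by rewrite /N; lia.
rewrite big1 ?addr0 // => i; rewrite -val_eqE /= => im.
have [mi|im'] := leqP m i; first by rewrite (Uk_eq0 mi x_til) brt0l.
by rewrite (@Uk_eq0 (N - i)%N y) ?brt0r //; move: im im'; rewrite /N; lia.
Qed.

Lemma nestU_top N x (rs : seq T) : List.Forall (@is_til _ L) rs -> (size rs * m.-1 <= N)%N ->
  nestU N x rs = if N == (size rs * m.-1)%N then nest x (map (Uk m.-1 Om) rs) else fun=> 0.
Proof.
move=> rs_til; elim: rs_til N => [|r {}rs r_til rs_til IH] N /=; first by case: (N == 0%N).
rewrite mulSn; set K := (size rs * m.-1)%N => KN; apply: functional_extensionality => pi.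
have term_eq0 (j : 'I_N.+1) : (j != m.-1 :> nat) || (N != m.-1 + K)%N ->
    brt br (nestU (N - j)%N x rs) (Uk j Om r) pi = 0.
  move=> jN; have [mj|jm] := leqP m j; first by rewrite (Uk_eq0 mj r_til) brt0r.
  rewrite IH; last by lia.
  by case: eqP => [NjK|]; [move: jN jm NjK; lia | rewrite brt0l].
case: eqP => [NmK|NmK].
  have mN : (m.-1 < N.+1)%N by lia.
  rewrite (bigD1 (Ordinal mN)) //= big1 => [|j jm].
    by rewrite addr0 (_ : N - m.-1 = K)%N ?IH ?eqxx //; lia.
  by apply: term_eq0; apply/orP; left; rewrite -val_eqE in jm.
by rewrite big1 // => j _; apply: term_eq0; apply/orP; right; apply/eqP.
Qed.

Lemma nest_Uk_eq0 x (rs : seq T) : is_til x -> List.Forall (@is_til _ L) rs ->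
  (m + m.-1 <= size rs * m.-1)%N -> nest x (map (Uk m.-1 Om) rs) = fun=> 0.
Proof.
move=> x_til rs_til big_rs; set N := (size rs * m.-1)%N.
have := nestU_top x rs_til (leqnn N); rewrite eqxx => <-.
rewrite (nestU_alternating _ x_til rs_til).
apply: functional_extensionality => pi; rewrite big1 // => i _.
have [mi|im] := leqP m i.
  by rewrite (Uk_eq0 mi x_til) nest0 (tlinear0 (tlinear_Uk _)) scaler0.
rewrite Uk_vanish ?scaler0 //; last exact/is_til_nest/rs_til/is_til_Uk.
move: big_rs im; rewrite /N; lia.
Qed.

Lemma Uk_adt_Uk_eq0 (bs : seq T) k x pi : (3 < m)%N -> List.Forall (@is_til _ L) bs ->
  (m.-1 <= k)%N -> is_til x -> Uk k [seq adt br (Uk m.-1 Om b) | b <- bs] x pi = 0.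
Proof.
move=> m_gt3 bs_til mk x_til; set Om' := [seq _ | b <- bs].
rewrite /Uk big1 // => S /eqP cS; pose b_ (j : 'I_(size Om')) := nth (fun=> 0) bs j.
have -> : [seq nth (@dzero _ L) Om' (val j) | j <- enum S] =
          map (adt br) (map (Uk m.-1 Om) (map b_ (enum S))).
  rewrite -!map_comp; apply: eq_map => j /=.
  by rewrite (nth_map (fun=> 0)) // -(size_map (fun b => adt br (Uk m.-1 Om b))) ltn_ord.
rewrite act_seq_adt -map_rev nest_Uk_eq0 //.
  have b_til j : is_til (b_ j).
    by apply: is_til_nth => //; rewrite -(size_map (fun b => adt br (Uk m.-1 Om b))) ltn_ord.
  by rewrite -map_rev; elim: (rev _) => [|j s IH] /=; constructor.
rewrite size_rev size_map -cardE cS; move: mk m_gt3; clear; nia.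
Qed.

End Nilpotent.
End Family.
End Bracket.

Theorem lemma34 (F : fieldType) (L : lmodType F) (br : L -> L -> L)
  (HL : lie_alg br) (Om : seq (dtil L))
  (HOm : forall j, (j < size Om)%N -> is_dtil br (nth (@dzero _ L) Om j))
  (HU1 : U1 Om) (HU2 : U2 Om) (m : nat) (Hm : (1 <= m)%N)
  (HU : forall k, (m <= k)%N -> forall x, is_til x -> forall pi, Uk k Om x pi = 0) :
  ((2 <= m)%N ->
     forall a b : til L, is_til a -> is_til b ->
       forall pi, brt br (Uk m.-1 Om a) (Uk m.-1 Om b) pi = 0)
  /\
  ((4 <= m)%N ->
     forall a : til L, is_til a ->
     forall P : seq {fset nat}, uniq P -> (forall pi, (pi \in P) = (a pi != 0)) ->
     let Om' := [seq adt br (Uk m.-1 Om (single pi (a pi))) | pi <- P] in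
     forall k, (m.-1 <= k)%N -> forall x, is_til x -> forall pi, Uk k Om' x pi = 0).
Proof.
have [brlinl brlinr _ _] := HL.
split=> [m_gt1 a b a_til b_til pi|m_gt3 a a_til P _ _ Om' k mk x x_til pi].
  exact: brt_Uk_pred_eq0.
rewrite /Om' (map_comp (fun b => adt br (Uk m.-1 Om b))).
apply: Uk_adt_Uk_eq0 => //.
by clear Om'; elim: P => [|pi0 P IH] /=; constructor => //; apply: is_til_single.
Qed.
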